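(* Let $\eta>0$, $n\ge1$, $b\in\{1,\dots,n\}$. Let $X_n=(x_1,\dots,x_n)$ and $\hat X_n=(\hat x_1,\dots,\hat x_n)$ with $x_i=(a_i,y_i)$, $\hat x_i=(\hat a_i,\hat y_i)\in\mathcal{X}\subseteq\mathbb{R}^d\times\mathbb{R}$, such that $x_i=\hat x_i$ for all but at most one index $i$. Assume $\sup_{x\in\mathcal{X}}\Vert x\Vert\le D<\infty$. Let $(\Omega_k)_{k\ge1}$ be i.i.d. uniformly random subsets of $\{1,\dots,n\}$ of cardinality $b$, and let $P$ and $\hat P$ be the transition kernels of the chains $\theta_k=\left(I-\frac{\eta}{b}H_k\right)\theta_{k-1}+\frac{\eta}{b}q_k$ and $\hat\theta_k=\left(I-\frac{\eta}{b}\hat H_k\right)\hat\theta_{k-1}+\frac{\eta}{b}\hat q_k$, where $H_k=\sum_{i\in\Omega_k}a_ia_i^\top$, $q_k=\sum_{i\in\Omega_k}a_iy_i$, $\hat H_k=\sum_{i\in\Omega_k}\hat a_i\hat a_i^\top$, $\hat q_k=\sum_{i\in\Omega_k}\hat a_i\hat y_i$. Let $\hat V(\theta)=1+\Vert\theta\Vert$. Then $$\sup_{\theta\in\mathbb{R}^d}\frac{\mathcal{W}_1(\delta_\theta P,\delta_\theta\hat P)}{\hat V(\theta)}\le\frac{2\eta D^2}{n}.$$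
   Context: $\delta_\theta P$ denotes $P(\theta,\cdot)$, the law of one step of the chain started at $\theta$. $\mathcal{W}_1$ is the 1-Wasserstein distance $\inf\mathbb{E}\Vert X-Y\Vert$ over couplings. *)

From HB Require Import structures.
From mathcomp Require Import all_boot all_order all_algebra.
From mathcomp Require Import classical_sets reals.
Set Implicit Arguments. Unset Strict Implicit. Unset Printing Implicit Defensive.
Import Order.TTheory GRing.Theory Num.Theory.
Local Open Scope ring_scope.
Local Open Scope classical_set_scope.

Definition enorm (R : realType) (d : nat) (v : 'cV[R]_d) : R :=
  Num.sqrt (\sum_(k < d) v k 0 ^+ 2).

Definition pnorm (R : realType) (d : nat) (x : 'cV[R]_d * R) : R :=
  Num.sqrt (\sum_(k < d) x.1 k 0 ^+ 2 + x.2 ^+ 2).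

(* 1-Wasserstein distance between two finitely supported probability laws
   mu = sum_s w1 s * delta_(f s) and nu = sum_s w2 s * delta_(g s) on R^d,
   as the infimum of E||X - Y|| over couplings (X,Y).  Every coupling of such
   laws is carried by the product of the supports, hence is a nonnegative
   matrix pi over S * S with marginals w1 and w2. *)
Definition W1_disc (R : realType) (d : nat) (S : finType)
    (w1 w2 : S -> R) (f g : S -> 'cV[R]_d) : R :=
  inf [set c : R | exists pi : {ffun S * S -> R},
     [/\ forall st, 0 <= pi st,
         forall s, \sum_(t : S) pi (s, t) = w1 s,
         forall t, \sum_(s : S) pi (s, t) = w2 t &
         c = \sum_(st : S * S) pi st * enorm (f st.1 - g st.2)]].

Definition unif_subset (R : realType) (n b : nat) (O : {set 'I_n}) : R :=
  if #|O| == b then ('C(n, b)%:R)^-1 else 0.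

Definition sgd_step (R : realType) (d n b : nat) (eta : R)
    (a : 'I_n -> 'cV[R]_d) (y : 'I_n -> R) (theta : 'cV[R]_d)
    (O : {set 'I_n}) : 'cV[R]_d :=
  let H := \sum_(i in O) (a i *m (a i)^T) in
  let q := \sum_(i in O) (y i *: a i) in
  (1%:M - (eta / b%:R) *: H) *m theta + (eta / b%:R) *: q.

(* Couple the two chains synchronously, drawing the same subset Omega for both.
   The two steps from theta then differ only when Omega contains the index j
   where the data sets differ, an event of probability b/n, and in that case
   by eta/b times the difference of two terms (y_j - <a_j, theta>) a_j, each
   of norm at most D^2 (1 + |theta|). *)

From HB Require Import structures.
From mathcomp Require Import all_boot all_order all_algebra.
From mathcomp Require Import classical_sets reals.
From mathcomp Require Import ring lra.
Set Implicit Arguments. Unset Strict Implicit. Unset Printing Implicit Defensive.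
Import Order.TTheory GRing.Theory Num.Theory.
Local Open Scope ring_scope.

Section EuclideanNorm.
Variables (R : realType) (d : nat).
Implicit Types (u v : 'cV[R]_d) (c : R).

Definition vdot u v : R := \sum_(k < d) u k 0 * v k 0.

Lemma vdotC u v : vdot u v = vdot v u.
Proof. by apply: eq_bigr => k _; rewrite mulrC. Qed.

Lemma vdot_ge0 u : 0 <= vdot u u.
Proof. by apply: sumr_ge0 => k _; rewrite -expr2 sqr_ge0. Qed.

Lemma enorm_ge0 u : 0 <= enorm u.
Proof. exact: sqrtr_ge0. Qed.

Lemma enorm_sqr u : enorm u ^+ 2 = vdot u u.
Proof.
rewrite /enorm (eq_bigr (fun k => u k 0 * u k 0)) => [|k _]; last exact: expr2.
by rewrite sqr_sqrtr ?vdot_ge0.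
Qed.

Lemma vdotDl u v w : vdot (u + v) w = vdot u w + vdot v w.
Proof. by rewrite -big_split; apply: eq_bigr => k _; rewrite mxE mulrDl. Qed.

Lemma vdotDr u v w : vdot w (u + v) = vdot w u + vdot w v.
Proof. by rewrite vdotC vdotDl !(vdotC w). Qed.

Lemma lagrange_identity u v :
  \sum_(i < d) \sum_(j < d) (u i 0 * v j 0 - u j 0 * v i 0) ^+ 2 =
  2 * (vdot u u * vdot v v - vdot u v ^+ 2).
Proof.
have sum2 (F G : 'I_d -> R) :
    (\sum_i F i) * (\sum_j G j) = \sum_i \sum_j F i * G j.
  by rewrite mulr_suml; apply: eq_bigr => i _; rewrite mulr_sumr.
have -> : 2 * (vdot u u * vdot v v - vdot u v ^+ 2) =
    vdot u u * vdot v v + vdot v v * vdot u u - 2 * (vdot u v * vdot u v).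
  by ring.
rewrite !sum2 mulr_sumr -big_split -sumrB; apply: eq_bigr => i _ /=.
rewrite mulr_sumr -big_split -sumrB; apply: eq_bigr => j _ /=; ring.
Qed.

Lemma vdot_sqr_le u v : vdot u v ^+ 2 <= vdot u u * vdot v v.
Proof.
rewrite -subr_ge0 -(@pmulr_rge0 _ 2) // -lagrange_identity.
by apply: sumr_ge0 => i _; apply: sumr_ge0 => j _; apply: sqr_ge0.
Qed.

Lemma ler_norm_vdot u v : `|vdot u v| <= enorm u * enorm v.
Proof.
rewrite -ler_sqr ?nnegrE ?mulr_ge0 ?enorm_ge0 //.
by rewrite real_normK ?num_real // exprMn !enorm_sqr vdot_sqr_le.
Qed.

Lemma enormD u v : enorm (u + v) <= enorm u + enorm v.
Proof.
rewrite -ler_sqr ?nnegrE ?addr_ge0 ?enorm_ge0 //.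
rewrite sqrrD !enorm_sqr vdotDl !vdotDr (vdotC v u).
have := le_trans (ler_norm _) (ler_norm_vdot u v); lra.
Qed.

Lemma enormZ c u : enorm (c *: u) = `|c| * enorm u.
Proof.
rewrite /enorm -sqrtr_sqr -sqrtrM ?sqr_ge0 // mulr_sumr.
by congr Num.sqrt; apply: eq_bigr => k _; rewrite mxE exprMn.
Qed.

Lemma enorm0 : enorm (0 : 'cV[R]_d) = 0.
Proof. by rewrite -(scale0r (0 : 'cV[R]_d)) enormZ normr0 mul0r. Qed.

Lemma enormB_le u v : enorm (u - v) <= enorm u + enorm v.
Proof. by rewrite -[enorm v]mul1r -normrN1 -enormZ scaleN1r enormD. Qed.

Lemma enorm_le_pnorm (x : 'cV[R]_d * R) : enorm x.1 <= pnorm x.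
Proof. by rewrite ler_wsqrtr // lerDl sqr_ge0. Qed.

Lemma norm_le_pnorm (x : 'cV[R]_d * R) : `|x.2| <= pnorm x.
Proof.
rewrite -sqrtr_sqr ler_wsqrtr // lerDr.
by apply: sumr_ge0 => k _; apply: sqr_ge0.
Qed.

Lemma enorm_residual_le (a t : 'cV[R]_d) (y D : R) :
  pnorm (a, y) <= D -> enorm ((y - vdot a t) *: a) <= D ^+ 2 * (1 + enorm t).
Proof.
move=> aD; have a_le := le_trans (enorm_le_pnorm (a, y)) aD.
have y_le := le_trans (norm_le_pnorm (a, y)) aD.
have D_ge0 := le_trans (enorm_ge0 a) a_le.
have res_le : `|y - vdot a t| <= D * (1 + enorm t).
  rewrite mulrDr mulr1; apply: le_trans (ler_normB _ _) _; rewrite lerD //.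
  exact: le_trans (ler_norm_vdot a t) (ler_wpM2r (enorm_ge0 t) a_le).
rewrite enormZ expr2 -mulrA mulrC; apply: ler_pM => //; exact: enorm_ge0.
Qed.

End EuclideanNorm.

Section SGDStep.
Variables (R : realType) (d n b : nat) (eta : R).
Implicit Types (a : 'I_n -> 'cV[R]_d) (y : 'I_n -> R) (t : 'cV[R]_d).
Implicit Types (O : {set 'I_n}) (j : 'I_n).

Lemma outer_mulmx (u t : 'cV[R]_d) : u *m u^T *m t = vdot u t *: u.
Proof.
rewrite -mulmxA [u^T *m t]mx11_scalar mul_mx_scalar; congr (_ *: _).
by rewrite mxE; apply: eq_bigr => k _; rewrite mxE.
Qed.

Lemma sgd_stepE a y t O :
  sgd_step b eta a y t O =
  t + (eta / b%:R) *: \sum_(i in O) (y i - vdot (a i) t) *: a i.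
Proof.
rewrite /sgd_step mulmxBl mul1mx -scalemxAl mulmx_suml -addrA.
under eq_bigr => i _ do rewrite outer_mulmx.
rewrite -scalerN -scalerDr -sumrN -big_split /=.
by congr (_ + _ *: _); apply: eq_bigr => i _; rewrite scalerBl addrC.
Qed.

Lemma sgd_stepB a ah y yh t O j :
  (forall i, i != j -> a i = ah i /\ y i = yh i) ->
  sgd_step b eta a y t O - sgd_step b eta ah yh t O =
  if j \in O then
    (eta / b%:R) *: ((y j - vdot (a j) t) *: a j - (yh j - vdot (ah j) t) *: ah j)
  else 0.
Proof.
move=> same; rewrite !sgd_stepE opprD addrACA subrr add0r -scalerBr -sumrB.
have zero_off i : i != j -> (y i - vdot (a i) t) *: a i - (yh i - vdot (ah i) t) *: ah i = 0.
  by move=> /same[-> ->]; rewrite subrr.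
case: ifP => jO; first by rewrite (bigD1 j) //= big1 ?addr0 // => i /andP[_ /zero_off].
rewrite big1 ?scaler0 // => i iO; apply: zero_off.
by apply: contraFN jO => /eqP <-.
Qed.

Lemma enorm_sgd_stepB_le (D : R) a ah y yh t O j :
  0 <= eta ->
  (forall i, pnorm (a i, y i) <= D) -> (forall i, pnorm (ah i, yh i) <= D) ->
  (forall i, i != j -> a i = ah i /\ y i = yh i) ->
  enorm (sgd_step b eta a y t O - sgd_step b eta ah yh t O) <=
  (j \in O)%:R * (eta / b%:R * (2 * D ^+ 2 * (1 + enorm t))).
Proof.
move=> eta_ge0 aD ahD same; rewrite (sgd_stepB _ _ same).
case: ifP => _; last by rewrite enorm0 mul0r.
have step_ge0 : 0 <= eta / b%:R by rewrite divr_ge0.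
rewrite mul1r enormZ ger0_norm // ler_wpM2l //.
apply: le_trans (enormB_le _ _) _; rewrite mulr2n mulrDl mulrDl mul1r.
by rewrite lerD // enorm_residual_le.
Qed.

End SGDStep.

Lemma W1_disc_le_diag (R : realType) (d : nat) (S : finType)
    (w : S -> R) (f g : S -> 'cV[R]_d) :
  (forall s, 0 <= w s) ->
  W1_disc w w f g <= \sum_s w s * enorm (f s - g s).
Proof.
move=> w_ge0; pose pi := [ffun st : S * S => (st.1 == st.2)%:R * w st.1].
have pi_row (F : S -> S -> R) s : \sum_t pi (s, t) * F s t = w s * F s s.
  rewrite (bigD1 s) //= big1 ?addr0 => [|t /negbTE ts]; rewrite ffunE /=.
    by rewrite eqxx mul1r.
  by rewrite eq_sym ts !mul0r.
apply: ge_inf.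
  by exists 0 => _ [p [p_ge0 _ _ ->]]; apply: sumr_ge0 => st _;
    rewrite mulr_ge0 ?enorm_ge0.
exists pi; split.
- by move=> st; rewrite ffunE mulr_ge0.
- move=> s; rewrite -[w s]mulr1 -(pi_row (fun _ _ => 1)).
  by apply: eq_bigr => t _; rewrite mulr1.
- move=> t; rewrite (bigD1 t) //= big1 ?addr0 => [|s /negbTE st]; rewrite ffunE /=.
    by rewrite eqxx mul1r.
  by rewrite st mul0r.
- under eq_bigr do rewrite -(pi_row (fun s t => enorm (f s - g t))).
  by rewrite pair_bigA; apply: eq_bigr => -[].
Qed.

Lemma unif_subset_ge0 (R : realType) (n b : nat) (O : {set 'I_n}) :
  0 <= @unif_subset R n b O.
Proof. by rewrite /unif_subset; case: ifP; rewrite ?invr_ge0. Qed.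

Lemma card_subsets_mem (n b : nat) (j : 'I_n.+1) :
  #|[set O : {set 'I_n.+1} | (#|O| == b.+1) && (j \in O)]| = 'C(n, b).
Proof.
set A := [set O : {set 'I_n.+1} | #|O| == b.+1].
set B := [set O : {set 'I_n.+1} | j \in O].
have AB : [set O : {set 'I_n.+1} | (#|O| == b.+1) && (j \in O)] = A :&: B.
  by apply/setP => O; rewrite !inE.
have AnotB : #|A :\: B| = 'C(n, b.+1).
  have cardCj : #|[set~ j]| = n by rewrite cardsC1 card_ord.
  rewrite -[in RHS]cardCj -cards_draws; apply: eq_card => O.
  by rewrite !inE finset.subsetC finset.sub1set !inE andbC.
have := cardsID B A; rewrite AnotB card_draws card_ord binS AB.
by rewrite addnC => /eqP; rewrite eqn_add2l => /eqP.
Qed.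

Lemma sum_unif_subset_mem (R : realType) (n b : nat) (j : 'I_n) :
  (0 < b <= n)%N ->
  \sum_(O : {set 'I_n}) @unif_subset R n b O * (j \in O)%:R = b%:R / n%:R.
Proof.
case: n j => [[]//|n] j; case: b => [//|b] /= bn.
rewrite (eq_bigr (fun O : {set 'I_n.+1} => if (#|O| == b.+1) && (j \in O)
                           then ('C(n.+1, b.+1)%:R)^-1 else 0 : R)); last first.
  by move=> O _; rewrite /unif_subset; case: (_ == _); case: (_ \in _);
    rewrite ?mulr1 ?mulr0.
rewrite -big_mkcond sumr_const /=.
have -> : #|[pred O : {set 'I_n.+1} | (#|O| == b.+1) && (j \in O)]| = 'C(n, b).
  by rewrite -(card_subsets_mem b j); apply: eq_card => O; rewrite !inE.
rewrite -[_ *+ 'C(n, b)]mulr_natr mulrC; apply/eqP.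
by rewrite eqr_div ?pnatr_eq0 -?lt0n ?bin_gt0 // -!natrM mulnC mul_bin_diag.
Qed.

Local Open Scope classical_set_scope.
Theorem lemma3p3 (R : realType) (d n b : nat) (eta D : R)
  (X : set ('cV[R]_d * R))
  (a ahat : 'I_n -> 'cV[R]_d) (y yhat : 'I_n -> R) :
  0 < eta -> (1 <= n)%N -> (1 <= b <= n)%N ->
  (forall x, X x -> pnorm x <= D) ->
  (forall i, X (a i, y i)) -> (forall i, X (ahat i, yhat i)) ->
  (exists j : 'I_n, forall i, i != j -> a i = ahat i /\ y i = yhat i) ->
  forall theta : 'cV[R]_d,
    W1_disc (@unif_subset R n b) (@unif_subset R n b)
        (@sgd_step R d n b eta a y theta) (@sgd_step R d n b eta ahat yhat theta)
      / (1 + enorm theta)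
    <= 2 * eta * D ^+ 2 / n%:R.
Proof.
move=> eta_gt0 n_gt0 b_range XD aX ahX [j same] theta.
have step_le O := enorm_sgd_stepB_le b theta O (ltW eta_gt0)
  (fun i => XD _ (aX i)) (fun i => XD _ (ahX i)) same.
have theta_pos : 0 < 1 + enorm theta by rewrite ltr_pwDl ?enorm_ge0.
rewrite ler_pdivrMr //; apply: le_trans (W1_disc_le_diag _ _ (@unif_subset_ge0 R n b)) _.
apply: le_trans (ler_sum _ (fun O _ => ler_wpM2l (unif_subset_ge0 _ _ _) (step_le O))) _.
set K := eta / b%:R * _.
under eq_bigr do rewrite mulrA; rewrite -mulr_suml sum_unif_subset_mem //.
have b_neq0 : (b%:R : R) != 0 by rewrite pnatr_eq0 -lt0n; case/andP: b_range.
have n_neq0 : (n%:R : R) != 0 by rewrite pnatr_eq0 -lt0n.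
suff -> : b%:R / n%:R * K = 2 * eta * D ^+ 2 / n%:R * (1 + enorm theta) by [].
by rewrite /K; field; apply/andP.
Qed.
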